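(* Let $d$ and $\alpha$ be positive integers. There is a constant $C$ depending only on $d$ and $\alpha$ such that: if $P(x)$ is a monic polynomial of degree $d$ with real coefficients and $x_0<x_1<\cdots<x_d$ are integers with $|P(x_i)|\leqslant\alpha$ for every $i\in\{0,\dots,d\}$, then $|x_d-x_0|\leqslant C$. *)

From mathcomp Require Import all_boot all_order all_algebra.
From mathcomp Require Import reals.

(* Lagrange interpolation at the nodes x_0 < ... < x_d writes the leading
   coefficient 1 of P as sum_i P(x_i) / prod_(j <> i) (x_i - x_j).  For integer
   nodes every factor of the i-th denominator has absolute value at least 1,
   and the one pairing x_i with the farther endpoint is at least
   (x_d - x_0) / 2.  Hence 1 <= (d + 1) * alpha * 2 / (x_d - x_0), that is
   x_d - x_0 <= 2 alpha (d + 1). *)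

From mathcomp Require Import all_boot all_order all_algebra.
From mathcomp Require Import reals zify ring.
Set Implicit Arguments.
Unset Strict Implicit.
Unset Printing Implicit Defensive.

Import Order.TTheory GRing.Theory Num.Theory.
Local Open Scope ring_scope.

Section LagrangeLeadCoef.
Variables (F : fieldType) (n : nat) (y : 'I_n.+1 -> F).
Hypothesis y_inj : injective y.

Definition lagrange_numer (i : 'I_n.+1) : {poly F} :=
  \prod_(j | j != i) ('X - (y j)%:P).

Lemma size_lagrange_numer i : size (lagrange_numer i) = n.+1.
Proof.
rewrite /lagrange_numer -big_filter size_prod_XsubC size_filter; congr _.+1.
by have := cardC1 i; rewrite card_ord cardE /enum_mem size_filter.
Qed.

Lemma coef_lagrange_numer i : (lagrange_numer i)`_n = 1.
Proof.
have := lead_coef_prod_XsubC (index_enum 'I_n.+1) (predC1 i) y.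
by rewrite /lead_coef size_lagrange_numer.
Qed.

Lemma horner_lagrange_numer i k :
  (lagrange_numer i).[y k] = (k == i)%:R * \prod_(j | j != i) (y i - y j).
Proof.
rewrite horner_prod; case: eqVneq => [-> | neq_ki].
  by rewrite mul1r; apply: eq_bigr => j _; rewrite hornerXsubC.
by rewrite mul0r (bigD1 k) //= hornerXsubC subrr mul0r.
Qed.

Lemma prod_node_diff_neq0 i : \prod_(j | j != i) (y i - y j) != 0.
Proof.
by apply/prodf_neq0 => j neq_ji; rewrite subr_eq0 (inj_eq y_inj) eq_sym.
Qed.

Lemma lagrange_expansion (P : {poly F}) : (size P <= n.+1)%N ->
  P = \sum_i (P.[y i] / \prod_(j | j != i) (y i - y j)) *: lagrange_numer i.
Proof.
move=> sizeP; apply/eqP; rewrite -subr_eq0; apply/eqP.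
apply: (@roots_geq_poly_eq0 _ _ [seq y i | i <- enum 'I_n.+1]).
- apply/allP => _ /mapP [k _ ->].
  rewrite /root hornerD hornerN horner_sum (bigD1 k) //=.
  rewrite [X in - (_ + X)]big1 => [|i neq_ik].
    rewrite hornerZ horner_lagrange_numer eqxx mul1r addr0.
    by rewrite divfK ?prod_node_diff_neq0 ?subrr.
  by rewrite hornerZ horner_lagrange_numer eq_sym (negbTE neq_ik) mul0r mulr0.
- by rewrite map_inj_uniq ?enum_uniq.
- rewrite size_map size_enum_ord; apply: leq_trans (size_polyD _ _) _.
  rewrite size_polyN geq_max sizeP /=.
  apply: (big_ind (fun p : {poly F} => size p <= n.+1)%N) => [|p q sp sq|i _].
  + by rewrite size_poly0.
  + by apply: leq_trans (size_polyD _ _) _; rewrite geq_max sp.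
  + by apply: leq_trans (size_scale_leq _ _) _; rewrite size_lagrange_numer.
Qed.

Lemma coef_lagrange_expansion (P : {poly F}) : (size P <= n.+1)%N ->
  P`_n = \sum_i P.[y i] / \prod_(j | j != i) (y i - y j).
Proof.
move=> /lagrange_expansion {1}->; rewrite coef_sum.
by apply: eq_bigr => i _; rewrite coefZ coef_lagrange_numer mulr1.
Qed.

End LagrangeLeadCoef.

Lemma norm_coef_interp_le (R : numFieldType) (n : nat) (P : {poly R})
    (y : 'I_n.+1 -> R) (a m : R) :
  injective y -> (size P <= n.+1)%N -> 0 < m ->
  (forall i, `|P.[y i]| <= a) ->
  (forall i, m <= `|\prod_(j | j != i) (y i - y j)|) ->
  `|P`_n| * m <= a *+ n.+1.
Proof.
move=> y_inj sizeP m_gt0 Py_le m_le.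
rewrite (coef_lagrange_expansion y_inj) //.
rewrite -[in a *+ _](card_ord n.+1) -sumr_const.
apply: le_trans (ler_wpM2r (ltW m_gt0) (ler_norm_sum _ _ _)) _.
rewrite mulr_suml; apply: ler_sum => i _.
have prod_gt0 := lt_le_trans m_gt0 (m_le i).
rewrite normrM normfV -mulrA; apply: le_trans (Py_le i).
by rewrite ler_piMr // mulrC ler_pdivrMr // mul1r.
Qed.

Section IncreasingNodes.
Variables (R : numDomainType) (n : nat) (x : 'I_n.+1 -> R).
Hypothesis x_incr : forall i j : 'I_n.+1, (i < j)%N -> x i < x j.

Lemma incr_nodes_inj : injective x.
Proof.
move=> i j xij; case: (ltngtP i j) => [/x_incr|/x_incr|/val_inj //];
  by rewrite xij ltxx.
Qed.

Lemma incr_nodes_bounds i : x ord0 <= x i <= x ord_max.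
Proof.
apply/andP; split.
  case: (posnP i) => [i0|/(@x_incr ord0 i)/ltW //].
  by rewrite (_ : i = ord0) //; apply: val_inj.
case: (ltnP i n) => [/(@x_incr i ord_max)/ltW //|ni].
rewrite (_ : i = ord_max) //.
by apply/val_inj/eqP; rewrite eqn_leq ni -ltnS ltn_ord.
Qed.

End IncreasingNodes.

Lemma norm_le_prod_nonzero (I : finType) (P : pred I) (F : I -> int) j :
  (forall k, P k -> F k != 0) -> P j -> `|F j| <= `|\prod_(k | P k) F k|.
Proof.
move=> F_neq0 Pj; rewrite normr_prod (bigD1 j) //= ler_peMr //.
apply: (big_ind (fun v : int => 1 <= v)) => // [u v|k /andP [Pk _]].
  exact: mulr_ege1.
by move: (F_neq0 k Pk); lia.
Qed.

Lemma range_le_twice_prod_dist (n : nat) (x : 'I_n.+1 -> int) i :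
  (forall i j : 'I_n.+1, (i < j)%N -> x i < x j) ->
  x ord_max - x ord0 <= 2 * `|\prod_(j | j != i) (x i - x j)|.
Proof.
move=> x_incr; have /andP [lo_le hi_ge] := incr_nodes_bounds x_incr i.
pose far : 'I_n.+1 := if x i - x ord0 <= x ord_max - x i then ord_max else ord0.
have range_le : x ord_max - x ord0 <= 2 * `|x i - x far|.
  by rewrite /far; case: ifP; lia.
apply: le_trans range_le _; rewrite ler_pM2l //.
case: (eqVneq far i) => [->|far_neq_i]; first by rewrite subrr normr0.
apply: norm_le_prod_nonzero => // k k_neq_i.
by rewrite subr_eq0 (inj_eq (incr_nodes_inj x_incr)) eq_sym.
Qed.

Theorem mainTheorem7 (R : realType) (d alpha : nat) :
  (0 < d)%N -> (0 < alpha)%N ->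
  exists C : nat,
    forall (P : {poly R}) (x : 'I_d.+1 -> int),
      P \is monic -> size P = d.+1 ->
      (forall i j : 'I_d.+1, (i < j)%N -> x i < x j) ->
      (forall i : 'I_d.+1, `|P.[(x i)%:~R]| <= alpha%:R) ->
      `|x ord_max - x ord0| <= C%:Z.
Proof.
move=> d_gt0 _; exists (2 * alpha * d.+1)%N => P x P_monic sizeP x_incr P_le.
set D := x ord_max - x ord0.
have D_gt0 : 0 < D by rewrite subr_gt0 x_incr.
pose y i : R := (x i)%:~R.
have y_inj : injective y by move=> i j /intr_inj /(incr_nodes_inj x_incr).
have half_D_le i : D%:~R / 2 <= `|\prod_(j | j != i) (y i - y j)|.
  have := range_le_twice_prod_dist i x_incr.
  rewrite -(ler_int R) rmorphM /= intr_norm rmorph_prod /=.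
  under eq_bigr do rewrite rmorphB /=.
  by rewrite ler_pdivrMr // mulrC.
have half_D_gt0 : 0 < D%:~R / 2 :> R by rewrite divr_gt0 ?ltr0z.
have := norm_coef_interp_le y_inj (eq_leq sizeP) half_D_gt0 P_le half_D_le.
have -> : P`_d = 1 by move/monicP: P_monic; rewrite /lead_coef sizeP.
rewrite normr1 mul1r ler_pdivrMr //.
rewrite gtr0_norm // -(ler_int R) -pmulrn !natrM.
suff -> : 2 * alpha%:R * d.+1%:R = alpha%:R *+ d.+1 * 2 :> R by [].
by rewrite -mulr_natr; ring.
Qed.
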